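(* Let $(G,\mathcal J)$ be a generalized Kähler structure on a Courant algebroid $E$ and $D$ a Levi-Civita connection of $G$. For $u\in E$ let $A_u$ be the endomorphism $v\mapsto (D_v\mathcal J)u$ of $E$ and $A_u^{\mathrm{sym}}$ its $\langle\cdot,\cdot\rangle$-symmetric part. Then the generalized connection $$\tilde D_uv=D_uv-\tfrac12\mathcal J(D_u\mathcal J)v-\tfrac14\{A_u^{\mathrm{sym}},\mathcal J\}v$$ (where $\{X,Y\}=XY+YX$) is a torsion-free generalized connection satisfying $\tilde DG=0$ and $\tilde D\mathcal J=0$.
   Context: A Courant algebroid on a manifold $M$ is a real vector bundle $E\to M$ with a nondegenerate symmetric bilinear form $\langle\cdot,\cdot\rangle$, an $\mathbb R$-bilinear bracket $[\cdot,\cdot]$ on $\Gamma(E)$ and a bundle map $\pi:E\to TM$ such that for all $u,v,w\in\Gamma(E)$, $f\in C^\infty(M)$: $[u,[v,w]]=[[u,v],w]+[v,[u,w]]$; $\pi([u,v])=[\pi(u),\pi(v)]$; $[u,fv]=\pi(u)(f)v+f[u,v]$; $\pi(u)\langle v,w\rangle=\langle[u,v],w\rangle+\langle v,[u,w]\rangle$; $2\langle[u,u],v\rangle=\pi(v)\langle u,u\rangle$. A generalized connection is an $\mathbb R$-linear $D:\Gamma(E)\to\Gamma(E^*\otimes E)$ with $D_u(fv)=\pi(u)(f)v+fD_uv$ and $\pi(u)\langle v,w\rangle=\langle D_uv,w\rangle+\langle v,D_uw\rangle$; its torsion is $T^D(u,v)=D_uv-D_vu-[u,v]+(Du)^*v$,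 with $(Du)^*$ the $\langle\cdot,\cdot\rangle$-adjoint of $w\mapsto D_wu$. A generalized metric is a subbundle $E_+$ on which $\langle\cdot,\cdot\rangle$ is nondegenerate; with $E_-=E_+^\perp$ it gives $G=\langle\cdot,\cdot\rangle|_{E_+}-\langle\cdot,\cdot\rangle|_{E_-}$ and $G^{\mathrm{end}}=\pm\mathrm{Id}$ on $E_\pm$. A Levi-Civita connection of $G$ is a torsion-free generalized connection with $DG=0$. A generalized almost complex structure is a $\langle\cdot,\cdot\rangle$-orthogonal $\mathcal J$ with $\mathcal J^2=-\mathrm{Id}$, integrable if $N_{\mathcal J}(u,v)=[\mathcal Ju,\mathcal Jv]-[u,v]-\mathcal J([\mathcal Ju,v]+[u,\mathcal Jv])=0$. $(G,\mathcal J)$ is generalized almost Hermitian if $G(\mathcal Ju,\mathcal Jv)=G(u,v)$, and generalized Kähler if moreover $\mathcal J$ and $G^{\mathrm{end}}\mathcal J$ are integrable. *)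

(* Algebraic (section-level) model of Courant algebroids:
   A plays the role of C^oo(M) (a commutative R-algebra, R a real field),
   E the module of sections Gamma(E), vector fields = R-linear derivations of A. *)
From HB Require Import structures.
From mathcomp Require Import all_boot all_order all_algebra.
Set Implicit Arguments. Unset Strict Implicit. Unset Printing Implicit Defensive.
Import Order.TTheory GRing.Theory Num.Theory.
Local Open Scope ring_scope.

Section CourantDefs.
Variables (R : realFieldType) (A : comAlgType R) (E : lmodType A).

Definition is_derivation (X : A -> A) : Prop :=
  (forall (r : R) (f g : A), X (r *: f + g) = r *: X f + X g) /\
  (forall f g : A, X (f * g) = X f * g + f * X g).

Definition alinear (F : E -> E) : Prop :=
  forall (f : A) (u v : E), F (f *: u + v) = f *: F u + F v.
Definition afunctional (phi : E -> A) : Prop :=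
  forall (f : A) (u v : E), phi (f *: u + v) = f * phi u + phi v.

(* Courant algebroid structure (ip = <.,.>, br = bracket, pi = anchor) *)
Record courant (ip : E -> E -> A) (br : E -> E -> E) (pi : E -> A -> A) : Prop := {
  ip_sym : forall u v, ip u v = ip v u;
  ip_lin : forall u, afunctional (ip u);
  ip_nondeg : forall u, (forall v, ip u v = 0) -> u = 0;
  ip_full : forall phi, afunctional phi -> exists u, forall v, phi v = ip u v;
  br_addl : forall u v w, br (u + v) w = br u w + br v w;
  br_addr : forall u v w, br u (v + w) = br u v + br u w;
  br_scalel : forall (r : R) u v, br (r%:A *: u) v = r%:A *: br u v;
  br_scaler : forall (r : R) u v, br u (r%:A *: v) = r%:A *: br u v;
  pi_der : forall u, is_derivation (pi u);
  pi_lin : forall (f : A) u v g, pi (f *: u + v) g = f * pi u g + pi v g;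
  br_jacobi : forall u v w, br u (br v w) = br (br u v) w + br v (br u w);
  pi_br : forall u v f, pi (br u v) f = pi u (pi v f) - pi v (pi u f);
  br_leibniz : forall u (f : A) v, br u (f *: v) = pi u f *: v + f *: br u v;
  pi_ip : forall u v w, pi u (ip v w) = ip (br u v) w + ip v (br u w);
  br_symm : forall u v, ip (br u u) v *+ 2 = pi v (ip u u)
}.

Record gen_connection (ip : E -> E -> A) (pi : E -> A -> A) (D : E -> E -> E) : Prop := {
  gc_tensorial : forall (f : A) u w v, D (f *: u + w) v = f *: D u v + D w v;
  gc_add : forall u v w, D u (v + w) = D u v + D u w;
  gc_leibniz : forall u (f : A) v, D u (f *: v) = pi u f *: v + f *: D u v;
  gc_metric : forall u v w, pi u (ip v w) = ip (D u v) w + ip v (D u w)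
}.

Definition is_adjoint (ip : E -> E -> A) (F Fs : E -> E) : Prop :=
  forall v w, ip (Fs v) w = ip v (F w).

Definition torsion_free (ip : E -> E -> A) (br : E -> E -> E) (D : E -> E -> E) : Prop :=
  forall u, exists Fs, is_adjoint ip (fun w => D w u) Fs /\
    forall v, D u v - D v u - br u v + Fs v = 0.

(* generalized metric, given through G^end (= +Id on E_+, -Id on E_- = E_+^perp) *)
Definition gen_metric (ip : E -> E -> A) (Gend : E -> E) : Prop :=
  alinear Gend /\ (forall u, Gend (Gend u) = u) /\
  (forall u v, ip (Gend u) (Gend v) = ip u v).

(* G = <.,.>|E_+ - <.,.>|E_- *)
Definition Gform (ip : E -> E -> A) (Gend : E -> E) (u v : E) : A := ip (Gend u) v.

Definition metric_preserving (ip : E -> E -> A) (pi : E -> A -> A) (Gend : E -> E)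
    (D : E -> E -> E) : Prop :=
  forall u v w, pi u (Gform ip Gend v w) =
    Gform ip Gend (D u v) w + Gform ip Gend v (D u w).

Definition gen_acs (ip : E -> E -> A) (J : E -> E) : Prop :=
  alinear J /\ (forall u, J (J u) = - u) /\ (forall u v, ip (J u) (J v) = ip u v).

Definition nijenhuis (br : E -> E -> E) (J : E -> E) (u v : E) : E :=
  br (J u) (J v) - br u v - J (br (J u) v + br u (J v)).

Definition integrable (br : E -> E -> E) (J : E -> E) : Prop :=
  forall u v, nijenhuis br J u v = 0.

Definition gen_kahler (ip : E -> E -> A) (br : E -> E -> E) (Gend J : E -> E) : Prop :=
  [/\ gen_metric ip Gend, gen_acs ip J,
      (forall u v, Gform ip Gend (J u) (J v) = Gform ip Gend u v),
      integrable br J & integrable br (fun u => Gend (J u))].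

Definition covJ (D : E -> E -> E) (J : E -> E) (u v : E) : E := D u (J v) - J (D u v).

End CourantDefs.

(* The correction C := D~ - D is, for each u, a <.,.>-skew endomorphism that is
   tensorial in u, so D~ is again a generalized connection, and C_u J - J C_u
   cancels D_u J.  Torsion-freeness of D~ reduces to a cyclic identity for C,
   which is the Nijenhuis identity of J written through the torsion-free
   connection D.  Compatibility with G needs C_u to commute with G, i.e.
   D_(G x) J = G (D_x J): the Nijenhuis identities of J and of G J differ by a
   cyclic sum of the defect <(D_x J) y, z> - <(D_(G x) J) y, G z>, and the
   symmetries of this defect under G force it to vanish. *)

From HB Require Import structures.
From mathcomp Require Import all_boot all_order all_algebra.
From mathcomp Require Import ring.
Import Order.TTheory GRing.Theory Num.Theory.
Local Open Scope ring_scope.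
Set Implicit Arguments. Unset Strict Implicit. Unset Printing Implicit Defensive.

(* [ring] takes no hypotheses: these lemmas let it prove an identity modulo
   known vanishing quantities. *)
Lemma eq_lincomb1 (A : comPzRingType) (x y a c : A) :
  a = 0 -> x - y = c * a -> x = y.
Proof. by move=> ->; rewrite mulr0 => /eqP; rewrite subr_eq0 => /eqP. Qed.

Lemma eq_lincomb2 (A : comPzRingType) (x y a b c d : A) :
  a = 0 -> b = 0 -> x - y = c * a + d * b -> x = y.
Proof. by move=> -> ->; rewrite !mulr0 addr0 => /eqP; rewrite subr_eq0 => /eqP. Qed.

Section Scalars.
Variables (R : realFieldType) (A : comAlgType R).

Lemma double_eq0 (x : A) : x *+ 2 = 0 -> x = 0.
Proof.
have two_neq0 : (2%:R : R) != 0 by rewrite pnatr_eq0.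
by move=> x2; rewrite -[x]scale1r -(mulVf two_neq0) -scalerA scaler_nat x2 scaler0.
Qed.

Lemma alg_half : (2^-1 : R)%:A = 4%:R * (8^-1 : R)%:A :> A.
Proof.
rewrite -(rmorph_nat (in_alg A)) /= mulr_algl scalerA; congr (_ %:A).
by field; rewrite ?pnatr_eq0.
Qed.

Lemma alg_quarter_half : (4^-1 : R)%:A * (2^-1 : R)%:A = (8^-1 : R)%:A :> A.
Proof.
rewrite mulr_algl scalerA; congr (_ %:A).
by field; rewrite ?pnatr_eq0.
Qed.

Lemma alg_halfD : (2^-1 : R)%:A + (2^-1 : R)%:A = 1 :> A.
Proof.
rewrite -scalerDl -[X in _ = X]scale1r; congr (_ %:A).
by field; rewrite ?pnatr_eq0.
Qed.

Lemma derivation0 (X : A -> A) : is_derivation X -> X 0 = 0.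
Proof.
case=> lin _; apply: (@addrI _ (X 0)); rewrite addr0.
by have := lin 1 0 0; rewrite !scale1r addr0.
Qed.

Lemma derivationN (X : A -> A) f : is_derivation X -> X (- f) = - X f.
Proof.
move=> dX; have := dX.1 (-1) f 0.
by rewrite !addr0 (derivation0 dX) addr0 !scaleN1r.
Qed.

End Scalars.

Section Alinear.
Variables (R : realFieldType) (A : comAlgType R) (E : lmodType A).
Variables (F : E -> E) (HF : alinear F).

Lemma alinear0 : F 0 = 0.
Proof.
apply: (@addrI _ (F 0)); rewrite addr0.
by have := HF 1 0 0; rewrite !scale1r addr0.
Qed.

Lemma alinearD (u v : E) : F (u + v) = F u + F v.
Proof. by have := HF 1 u v; rewrite !scale1r. Qed.

Lemma alinearZ (f : A) (u : E) : F (f *: u) = f *: F u.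
Proof. by have := HF f u 0; rewrite !addr0 alinear0 addr0. Qed.

Lemma alinearN (u : E) : F (- u) = - F u.
Proof. by rewrite -scaleN1r alinearZ scaleN1r. Qed.

End Alinear.

Section CourantAlgebroid.
Variables (R : realFieldType) (A : comAlgType R) (E : lmodType A).
Variables (ip : E -> E -> A) (br : E -> E -> E) (pi : E -> A -> A).
Hypothesis HC : courant ip br pi.

Lemma ipC u v : ip u v = ip v u. Proof. exact: ip_sym HC u v. Qed.

Lemma ipDr u v w : ip u (v + w) = ip u v + ip u w.
Proof. by have := ip_lin HC u 1 v w; rewrite scale1r mul1r. Qed.

Lemma ip0r u : ip u 0 = 0.
Proof. by apply: (@addrI _ (ip u 0)); rewrite -ipDr !addr0. Qed.

Lemma ipZr u f v : ip u (f *: v) = f * ip u v.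
Proof. by have := ip_lin HC u f v 0; rewrite !addr0 ip0r addr0. Qed.

Lemma ipNr u v : ip u (- v) = - ip u v.
Proof. by rewrite -scaleN1r ipZr mulN1r. Qed.

Lemma ipDl u v w : ip (u + v) w = ip u w + ip v w.
Proof. by rewrite ipC ipDr !(ipC w). Qed.

Lemma ipZl f u v : ip (f *: u) v = f * ip u v.
Proof. by rewrite ipC ipZr ipC. Qed.

Lemma ipNl u v : ip (- u) v = - ip u v.
Proof. by rewrite ipC ipNr ipC. Qed.

Lemma ip0l u : ip 0 u = 0.
Proof. by rewrite ipC ip0r. Qed.

Lemma ip_ext x y : (forall w, ip x w = ip y w) -> x = y.
Proof.
move=> xy; apply/eqP; rewrite -subr_eq0; apply/eqP; apply: (ip_nondeg HC) => w.
by rewrite ipDl ipNl xy subrr.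
Qed.

Ltac ip_ring := apply: ip_ext => ?; rewrite ?(ipDl, ipNl, ipZl, ip0l); ring.

Lemma gen_acs_ipl J0 : gen_acs ip J0 -> forall u v, ip (J0 u) v = - ip u (J0 v).
Proof.
by case=> _ [J0J0 J0_ortho] u v; rewrite -[ip u (J0 v)]J0_ortho J0J0 ipNr opprK.
Qed.

Lemma gen_metric_ipl G : gen_metric ip G -> forall u v, ip (G u) v = ip u (G v).
Proof. by case=> _ [GG G_ortho] u v; rewrite -[ip u (G v)]G_ortho GG. Qed.

Lemma metric_preservingP D G : gen_connection ip pi D ->
  metric_preserving ip pi G D <-> (forall u v, D u (G v) = G (D u v)).
Proof.
rewrite /metric_preserving /Gform => HD; split=> [DG u v | DG u v w].
  apply: ip_ext => w; apply: (@addIr _ (ip (G v) (D u w))).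
  by rewrite -(gc_metric HD) DG.
by rewrite (gc_metric HD) DG.
Qed.

Section Connection.
Variable D : E -> E -> E.
Hypothesis HD : gen_connection ip pi D.

Lemma conn0r u : D u 0 = 0.
Proof. by apply: (@addrI _ (D u 0)); rewrite -(gc_add HD) !addr0. Qed.

Lemma connNr u v : D u (- v) = - D u v.
Proof. by apply: (@addrI _ (D u v)); rewrite -(gc_add HD) !subrr conn0r. Qed.

Lemma gen_connection_perturb (C Dt : E -> E -> E) :
  (forall u v, Dt u v = D u v + C u v) ->
  (forall f u u' v, C (f *: u + u') v = f *: C u v + C u' v) ->
  (forall u, alinear (C u)) ->
  (forall u v w, ip (C u v) w = - ip v (C u w)) ->
  gen_connection ip pi Dt.
Proof.
move=> DtE C_tens C_lin C_skew; split=> [f u u' v | u v w | u f v | u v w];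
  rewrite !DtE.
- by rewrite (gc_tensorial HD) C_tens scalerDr addrACA.
- by rewrite (gc_add HD) (alinearD (C_lin u)) addrACA.
- by rewrite (gc_leibniz HD) (alinearZ (C_lin u)) scalerDr addrA.
- by rewrite ipDl ipDr (gc_metric HD) C_skew addrACA addNr addr0.
Qed.

Section CovariantDerivative.
Variable J0 : E -> E.
Hypothesis HJ0 : gen_acs ip J0.

Let J0_lin : alinear J0. Proof. by case: HJ0. Qed.
Let J0J0 u : J0 (J0 u) = - u. Proof. by case: HJ0 => _ []. Qed.

Lemma covJ_alinearl v : alinear (fun u => covJ D J0 u v).
Proof.
move=> f u u'; rewrite /covJ !(gc_tensorial HD) (alinearD J0_lin) (alinearZ J0_lin).
by ip_ring.
Qed.

Lemma covJ_alinearr u : alinear (covJ D J0 u).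
Proof.
move=> f v w; rewrite /covJ (alinearD J0_lin) (alinearZ J0_lin) !(gc_add HD).
by rewrite !(gc_leibniz HD) !(alinearD J0_lin) !(alinearZ J0_lin); ip_ring.
Qed.

Lemma covJ_anticomm u v : covJ D J0 u (J0 v) = - J0 (covJ D J0 u v).
Proof.
rewrite /covJ J0J0 connNr (alinearD J0_lin) (alinearN J0_lin) J0J0.
by ip_ring.
Qed.

Lemma covJ_skew u v w : ip (covJ D J0 u v) w = - ip v (covJ D J0 u w).
Proof.
have m1 := gc_metric HD u (J0 v) w; have m2 := gc_metric HD u v (J0 w).
rewrite (gen_acs_ipl HJ0 v w) (derivationN _ (pi_der HC u)) in m1.
have m : ip (D u (J0 v)) w + ip (J0 v) (D u w)
          + (ip (D u v) (J0 w) + ip v (D u (J0 w))) = 0.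
  by rewrite -m1 -m2 addNr.
apply: (eq_lincomb1 (c := 1) m).
rewrite /covJ ipDl ipNl !ipDr !ipNr !(gen_acs_ipl HJ0) [ip v (J0 _)]ipC (gen_acs_ipl HJ0).
ring.
Qed.

End CovariantDerivative.

Section TorsionFree.
Hypothesis HT : torsion_free ip br D.

Lemma ip_br u v w : ip (br u v) w = ip (D u v) w - ip (D v u) w + ip v (D w u).
Proof.
have [Fs [Fs_adj torsion0]] := HT u.
have := torsion0 v; rewrite addrAC => /subr0_eq <-.
by rewrite !ipDl ipNl Fs_adj.
Qed.

Lemma integrable_covJ J0 : gen_acs ip J0 -> integrable br J0 -> forall u v w,
  ip (covJ D J0 (J0 u) v) w - ip (covJ D J0 (J0 v) u) w
  - ip (covJ D J0 v u) (J0 w) + ip (covJ D J0 u v) (J0 w)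
  + ip (covJ D J0 (J0 w) u) v + ip (covJ D J0 w u) (J0 v) = 0.
Proof.
move=> HJ0 NJ0 u v w; have J0J0 x : J0 (J0 x) = - x by case: HJ0 => _ [].
rewrite -(ip0l w) -(NJ0 u v) /nijenhuis /covJ.
rewrite !(ipDl, ipNl) !(gen_acs_ipl HJ0) !(ipDl, ipNl) !ip_br.
rewrite !(ipC (J0 v) (D _ _)) !(ipC v (D _ _)) !J0J0 !ipNr.
ring.
Qed.

Lemma torsion_free_perturb (C Dt : E -> E -> E) :
  (forall u v, Dt u v = D u v + C u v) ->
  (forall u v w, ip (C u v) w - ip (C v u) w + ip v (C w u) = 0) ->
  torsion_free ip br Dt.
Proof.
move=> DtE C_cyclic u; exists (fun v => br u v - Dt u v + Dt v u).
split=> [v w /= | v]; last by ip_ring.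
rewrite !(ipDl, ipNl) ip_br !DtE !(ipDl, ipDr).
apply: (eq_lincomb1 (c := -1) (C_cyclic u v w)); ring.
Qed.

Section GeneralizedKahler.
Variables (G J : E -> E) (Asym : E -> E -> E).
Hypotheses (HG : gen_metric ip G) (HJ : gen_acs ip J).
Hypothesis HGJ : forall u v, Gform ip G (J u) (J v) = Gform ip G u v.
Hypotheses (HNJ : integrable br J) (HNGJ : integrable br (fun u => G (J u))).
Hypothesis HM : metric_preserving ip pi G D.
Hypothesis HAsym : forall u v w, ip (Asym u v) w =
  (2^-1 : R)%:A * (ip (covJ D J v u) w + ip v (covJ D J w u)).

Let J_lin : alinear J. Proof. by case: HJ. Qed.
Let G_lin : alinear G. Proof. by case: HG. Qed.
Let JJ u : J (J u) = - u. Proof. by case: HJ => _ []. Qed.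
Let GG u : G (G u) = u. Proof. by case: HG => _ []. Qed.
Let ipJl := gen_acs_ipl HJ.
Let ipGl := gen_metric_ipl HG.
Let JD := alinearD J_lin.
Let JZ := alinearZ J_lin.
Let JN := alinearN J_lin.
Let GD := alinearD G_lin.
Let GZ := alinearZ G_lin.
Let GN := alinearN G_lin.

Lemma GJ_comm u : G (J u) = J (G u).
Proof.
apply: ip_ext => w; rewrite ipJl.
by have := HGJ u (- J w); rewrite /Gform JN JJ opprK ipNr => ->.
Qed.

Lemma JG_comm u : J (G u) = G (J u).
Proof. by rewrite GJ_comm. Qed.

Lemma gen_acs_GJ : gen_acs ip (fun u => G (J u)).
Proof.
split=> [f u v | ]; first by rewrite JD JZ GD GZ.
split=> [u | u v]; first by rewrite GJ_comm GG JJ.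
by rewrite ipGl GG; case: HJ => _ [_ ->].
Qed.

Lemma DG u v : D u (G v) = G (D u v).
Proof. exact: (metric_preservingP G HD).1 HM u v. Qed.

Lemma covJ_G u v : covJ D J u (G v) = G (covJ D J u v).
Proof. by rewrite /covJ -GJ_comm !DG -GJ_comm GD GN. Qed.

Lemma covJ_GJ u v : covJ D (fun x => G (J x)) u v = G (covJ D J u v).
Proof. by rewrite /covJ DG GD GN. Qed.

Definition dJ x y z := ip (covJ D J x y) z.

Lemma dJDl a b y z : dJ (a + b) y z = dJ a y z + dJ b y z.
Proof. by rewrite /dJ (alinearD (covJ_alinearl HJ y) a b) ipDl. Qed.

Lemma dJZl f a y z : dJ (f *: a) y z = f * dJ a y z.
Proof. by rewrite /dJ (alinearZ (covJ_alinearl HJ y) f a) ipZl. Qed.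

Lemma dJNl a y z : dJ (- a) y z = - dJ a y z.
Proof. by rewrite /dJ (alinearN (covJ_alinearl HJ y) a) ipNl. Qed.

Lemma dJDm x a b z : dJ x (a + b) z = dJ x a z + dJ x b z.
Proof. by rewrite /dJ (alinearD (covJ_alinearr HJ x)) ipDl. Qed.

Lemma dJZm x f a z : dJ x (f *: a) z = f * dJ x a z.
Proof. by rewrite /dJ (alinearZ (covJ_alinearr HJ x)) ipZl. Qed.

Lemma dJNm x a z : dJ x (- a) z = - dJ x a z.
Proof. by rewrite /dJ (alinearN (covJ_alinearr HJ x)) ipNl. Qed.

Lemma dJDr x y a b : dJ x y (a + b) = dJ x y a + dJ x y b.
Proof. exact: ipDr. Qed.

Lemma dJZr x y f a : dJ x y (f *: a) = f * dJ x y a.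
Proof. exact: ipZr. Qed.

Lemma dJNr x y a : dJ x y (- a) = - dJ x y a.
Proof. exact: ipNr. Qed.

Lemma dJ_Jm x y z : dJ x (J y) z = dJ x y (J z).
Proof. by rewrite /dJ covJ_anticomm // ipNl ipJl opprK. Qed.

Lemma dJ_Gm x y z : dJ x (G y) z = dJ x y (G z).
Proof. by rewrite /dJ covJ_G ipGl. Qed.

Lemma dJ_swap x y z : dJ x y z = - dJ x z y.
Proof. by rewrite /dJ covJ_skew // ipC. Qed.

Lemma dJ_swapJ x y z : dJ x y (J z) = - dJ x z (J y).
Proof. by rewrite dJ_swap dJ_Jm. Qed.

Lemma dJ_swapG x y z : dJ x y (G z) = - dJ x z (G y).
Proof. by rewrite dJ_swap dJ_Gm. Qed.

Lemma dJ_swapJG x y z : dJ x y (G (J z)) = - dJ x z (G (J y)).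
Proof. by rewrite dJ_swap dJ_Gm dJ_Jm GJ_comm. Qed.

Lemma dJ_nijenhuis u v w :
  dJ (J u) v w - dJ (J v) u w - dJ v u (J w) + dJ u v (J w)
  + dJ (J w) u v + dJ w u (J v) = 0.
Proof. exact: integrable_covJ HJ HNJ u v w. Qed.

Lemma dJ_nijenhuis_GJ u v w :
  dJ (G (J u)) v (G w) - dJ (G (J v)) u (G w) - dJ v u (J w) + dJ u v (J w)
  + dJ (G (J w)) u (G v) + dJ w u (J v) = 0.
Proof.
have := integrable_covJ gen_acs_GJ HNGJ u v w.
by rewrite /= !covJ_GJ !ipGl !GG.
Qed.

Definition Gdefect x y z := dJ x y z - dJ (G x) y (G z).

Lemma Gdefect_cyclic u v w :
  Gdefect (J u) v w - Gdefect (J v) u w + Gdefect (J w) u v = 0.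
Proof.
apply: (eq_lincomb2 (c := 1) (d := -1) (dJ_nijenhuis u v w) (dJ_nijenhuis_GJ u v w)).
by rewrite /Gdefect; ring.
Qed.

Lemma Gdefect_GG x y z : Gdefect x (G y) (G z) = Gdefect x y z.
Proof. by rewrite /Gdefect !dJ_Gm !GG. Qed.

Lemma Gdefect_G x y z : Gdefect (G x) y (G z) = - Gdefect x y z.
Proof. by rewrite /Gdefect !GG opprB. Qed.

Lemma Gdefect_J u v w : Gdefect (J u) v w = 0.
Proof.
apply: double_eq0; have := Gdefect_cyclic u (G v) (G w).
rewrite Gdefect_GG -!GJ_comm !Gdefect_G => cyclicG.
apply: (eq_lincomb2 (c := 1) (d := 1) (Gdefect_cyclic u v w) cyclicG); ring.
Qed.

Lemma dJ_Gl x y z : dJ (G x) y z = dJ x y (G z).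
Proof.
have := Gdefect_J (- J x) y (G z).
by rewrite /Gdefect JN JJ opprK GG => /subr0_eq.
Qed.

(* Moves every [G] and [J] into the last argument of [dJ] (where [G J] is the
   normal form of [J G]); [dJ_order] then fixes the order of the last two. *)
Ltac dJ_norm := rewrite ?(dJDl, dJZl, dJNl, dJDm, dJZm, dJNm, dJDr, dJZr, dJNr,
  JD, JZ, JN, GD, GZ, GN, JJ, GG, JG_comm, dJ_Jm, dJ_Gm, dJ_Gl, opprK).
Ltac dJ_order a b :=
  rewrite ?(dJ_swap _ a b, dJ_swapJ _ a b, dJ_swapG _ a b, dJ_swapJG _ a b).

Definition Dtilde u v := D u v - (2^-1 : R)%:A *: J (covJ D J u v)
  - (4^-1 : R)%:A *: (Asym u (J v) + J (Asym u v)).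

Definition correction u v := Dtilde u v - D u v.

Lemma DtildeE u v : Dtilde u v = D u v + correction u v.
Proof. by rewrite /correction addrC subrK. Qed.

Lemma ip_correction u v w : ip (correction u v) w = (2^-1 : R)%:A * dJ u v (J w)
  - (4^-1 : R)%:A * (2^-1 : R)%:A *
    (dJ (J v) u w + dJ w u (J v) - dJ v u (J w) - dJ (J w) u v).
Proof.
rewrite /correction /Dtilde !(ipDl, ipNl, ipZl) !ipJl !HAsym (ipC (J v)) (ipC v) /dJ.
ring.
Qed.

Lemma correction_tensorial f u u' v :
  correction (f *: u + u') v = f *: correction u v + correction u' v.
Proof.
apply: ip_ext => z; rewrite ip_correction ipDl ipZl !ip_correction.
by dJ_norm; ring.
Qed.

Lemma correction_alinear u : alinear (correction u).
Proof.
move=> f v v'; apply: ip_ext => z; rewrite ip_correction ipDl ipZl !ip_correction.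
by dJ_norm; ring.
Qed.

Lemma correction_skew u v w : ip (correction u v) w = - ip v (correction u w).
Proof. by rewrite [ip v _]ipC !ip_correction; dJ_norm; dJ_order w v; ring. Qed.

Lemma correction_G u v : correction u (G v) = G (correction u v).
Proof.
apply: ip_ext => z; rewrite ipGl !ip_correction; dJ_norm.
by dJ_order u v; dJ_order z v; dJ_order z u; ring.
Qed.

Lemma correction_covJ u v : correction u (J v) - J (correction u v) = - covJ D J u v.
Proof.
have half : (2^-1 : R)%:A + (2^-1 : R)%:A - 1 = 0 :> A by rewrite alg_halfD subrr.
apply: ip_ext => z; rewrite ipDl ipNl ipJl opprK !ip_correction ipNl -/(dJ u v z).
apply: (eq_lincomb1 (c := - dJ u v z) half); dJ_norm.
by dJ_order z v; ring.
Qed.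

Lemma correction_torsion u v w :
  ip (correction u v) w - ip (correction v u) w + ip v (correction w u) = 0.
Proof.
rewrite [ip v _]ipC !ip_correction alg_quarter_half alg_half.
apply: (eq_lincomb1 (c := 2%:R * (8^-1 : R)%:A) (dJ_nijenhuis u v w)); dJ_norm.
by dJ_order v u; dJ_order w u; dJ_order w v; ring.
Qed.

Lemma Dtilde_connection : gen_connection ip pi Dtilde.
Proof.
exact: gen_connection_perturb DtildeE correction_tensorial correction_alinear
  correction_skew.
Qed.

Lemma Dtilde_torsion_free : torsion_free ip br Dtilde.
Proof. exact: torsion_free_perturb DtildeE correction_torsion. Qed.

Lemma Dtilde_metric : metric_preserving ip pi G Dtilde.
Proof.
apply/(metric_preservingP G Dtilde_connection) => u v.
by rewrite !DtildeE DG correction_G GD.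
Qed.

Lemma Dtilde_covJ u v : covJ Dtilde J u v = 0.
Proof. by rewrite /covJ !DtildeE JD opprD addrACA correction_covJ subrr. Qed.

End GeneralizedKahler.
End TorsionFree.
End Connection.
End CourantAlgebroid.

Unset Implicit Arguments.

Theorem theorem5p4 (R : realFieldType) (A : comAlgType R) (E : lmodType A)
    (ip : E -> E -> A) (br : E -> E -> E) (pi : E -> A -> A)
    (Gend J : E -> E) (D : E -> E -> E) (Asym : E -> E -> E) :
  courant ip br pi ->
  gen_kahler ip br Gend J ->
  gen_connection ip pi D -> torsion_free ip br D -> metric_preserving ip pi Gend D ->
  (* Asym u = symmetric part of A_u : v |-> (D_v J) u *)
  (forall u v w, ip (Asym u v) w =
     (2^-1 : R)%:A * (ip (covJ D J v u) w + ip v (covJ D J w u))) ->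
  let Dt := fun u v => D u v - (2^-1 : R)%:A *: J (covJ D J u v)
                        - (4^-1 : R)%:A *: (Asym u (J v) + J (Asym u v)) in
  [/\ gen_connection ip pi Dt, torsion_free ip br Dt,
      metric_preserving ip pi Gend Dt & forall u v, covJ Dt J u v = 0].
Proof.
move=> HC [HG HJ HGJ HNJ HNGJ] HD HT HM HAsym Dt; split.
- exact (Dtilde_connection HC HD HJ HAsym).
- exact (Dtilde_torsion_free HC HD HT HJ HNJ HAsym).
- exact (Dtilde_metric HC HD HT HG HJ HGJ HNJ HNGJ HM HAsym).
- exact (Dtilde_covJ HC HD HJ HAsym).
Qed.
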